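(* Let $m$ be a positive integer. Every $2^m(2^{m+1}+1)^{m+2}$-$T_0T^\ast$-perfect number $n>1$ has the form $p_1^{2^{m+1}(2^{m+1}+1)^{m+2}-1}$ for a prime $p_1$, or the form $p_1\cdots p_{m+2}$ for distinct primes $p_1,\dots,p_{m+2}$.
   Context: For a positive integer $m'$, $T(m')$ denotes the product of all positive divisors of $m'$, and $T^\ast(m')$ the product of all unitary divisors of $m'$ (divisors $d$ with $\gcd(d,m'/d)=1$). For an integer $K\ge 2$, an integer $n>1$ is called $K$-$T_0T^\ast$-perfect if $T(T^\ast(n))=n^K$. *)

From mathcomp Require Import all_boot.
Set Implicit Arguments. Unset Strict Implicit. Unset Printing Implicit Defensive.

Definition prod_divisors (m : nat) : nat := \prod_(d <- divisors m) d.

Definition prod_unitary_divisors (m : nat) : nat :=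
  \prod_(d <- divisors m | coprime d (m %/ d)) d.

Definition K_T0Tstar_perfect (K n : nat) : Prop :=
  1 < n /\ prod_divisors (prod_unitary_divisors n) = n ^ K.

From mathcomp Require Import all_boot.
Set Implicit Arguments. Unset Strict Implicit. Unset Printing Implicit Defensive.

(* Write n = prod_p p^(a_p) with w distinct primes. Pairing every divisor d of N
   with N/d gives T(N)^2 = N^tau(N); pairing the unitary divisors the same way,
   and counting them (2^w of them, by multiplicativity), gives T*(n) = n^t with
   t = 2^(w-1). So T(T*(n)) = n^K reads 2K = t * prod_p (t a_p + 1).
   If w = 1 this says a = 2K - 1. Otherwise t is even and the product is odd, so
   comparing 2-adic valuations with 2K = 2^(m+1) (2^(m+1)+1)^(m+2) gives
   t = 2^(m+1), i.e. w = m + 2; then prod_p (t a_p + 1) = (t+1)^w with every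
   factor at least t + 1 forces all a_p = 1. *)

Lemma divn_divn_dvd N d : 0 < N -> d %| N -> N %/ (N %/ d) = d.
Proof. by move=> N_gt0 dvd_dN; rewrite divnA // mulKn. Qed.

Lemma perm_divisors_compl N : 0 < N ->
  perm_eq (divisors N) [seq N %/ d | d <- divisors N].
Proof.
move=> N_gt0; apply: uniq_perm; first exact: divisors_uniq.
  rewrite map_inj_in_uniq ?divisors_uniq // => x y.
  rewrite -!dvdn_divisors // => xN yN eq_xy.
  by rewrite -(divn_divn_dvd N_gt0 xN) eq_xy divn_divn_dvd.
move=> d; rewrite -dvdn_divisors //; apply/idP/mapP => [dN | [e]].
  by exists (N %/ d); rewrite ?divn_divn_dvd // -dvdn_divisors ?dvdn_div.
by rewrite -dvdn_divisors // => eN ->; apply: dvdn_div.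
Qed.

Lemma prod_divisors_compl_sqr N (P : pred nat) : 0 < N ->
  {in divisors N, forall d, P (N %/ d) = P d} ->
  (\prod_(d <- divisors N | P d) d) ^ 2 = N ^ count P (divisors N).
Proof.
move=> N_gt0 P_compl.
have prod_compl :
    \prod_(d <- divisors N | P d) d = \prod_(d <- divisors N | P d) (N %/ d).
  rewrite [LHS](perm_big _ (perm_divisors_compl N_gt0)) big_map.
  rewrite [LHS]big_seq_cond [RHS]big_seq_cond; apply: eq_bigl => d.
  by case dN: (d \in _); rewrite //= P_compl.
rewrite expnS expn1 {2}prod_compl -big_split /=.
rewrite big_seq_cond (eq_bigr (fun=> N)); last first.
  by move=> d /andP[]; rewrite -dvdn_divisors // => /divnK; rewrite mulnC.
by rewrite -big_seq_cond big_const_seq iter_muln_1.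
Qed.

(* [divisors n] is built by [add_divisors], which multiplies the list of
   divisors found so far by 1, p, ..., p^e for each prime factor p^e of n. *)
Lemma size_divisors n :
  size (divisors n) = \prod_(p <- primes n) (logn p n).+1.
Proof.
have size_add f s : size (PrimeDecompAux.add_divisors f s) = f.2.+1 * size s.
  case: f => p e; rewrite /PrimeDecompAux.add_divisors /=.
  by elim: e => [|e IHe] /=; rewrite ?mul1n // size_merge size_cat size_map IHe mulSn addnC.
rewrite /divisors prime_decompE.
by elim: (primes n) => [|p r IHr]; rewrite ?big_nil // big_cons -IHr size_add.
Qed.

Lemma gcdn_dvdM_coprime a b x y :
  coprime a b -> x %| a -> y %| b -> gcdn (x * y) a = x.
Proof.
by move=> cab xa yb; rewrite gcdnC Gauss_gcdl ?(coprime_dvdr yb) //; apply/gcdn_idPr.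
Qed.

Lemma gcdn_coprimeM d a b : coprime a b -> d %| a * b -> d = gcdn d a * gcdn d b.
Proof.
move=> cab dab; apply/eqP; rewrite eqn_dvd; apply/andP; split.
  rewrite muln_gcdl !muln_gcdr !dvdn_gcd dab andbT.
  by rewrite (dvdn_mulr _ (dvdnn d)) (dvdn_mulr _ (dvdnn d)) (dvdn_mull _ (dvdnn d)).
rewrite Gauss_dvd ?dvdn_gcdl //.
exact: coprime_dvdl (dvdn_gcdr d a) (coprime_dvdr (dvdn_gcdr d b) cab).
Qed.

Lemma divisorsM a b : 0 < a -> 0 < b -> coprime a b ->
  perm_eq (divisors (a * b)) [seq x * y | x <- divisors a, y <- divisors b].
Proof.
move=> a_gt0 b_gt0 cab; have cba : coprime b a by rewrite coprime_sym.
have ab_gt0 : 0 < a * b by rewrite muln_gt0 a_gt0.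
apply: uniq_perm; first exact: divisors_uniq.
  apply: allpairs_uniq; rewrite ?divisors_uniq //.
  move=> [x1 y1] [x2 y2] /allpairsP[[x y] /= [xa yb [-> ->]]].
  move=> /allpairsP[[x' y'] /= [x'a y'b [-> ->]]] /= eq_xy.
  move: xa yb x'a y'b; rewrite -!dvdn_divisors // => xa yb x'a y'b.
  rewrite -(gcdn_dvdM_coprime cab xa yb) eq_xy (gcdn_dvdM_coprime cab x'a y'b).
  rewrite -(gcdn_dvdM_coprime cba yb xa) mulnC eq_xy mulnC.
  by rewrite (gcdn_dvdM_coprime cba y'b x'a).
move=> d; rewrite -dvdn_divisors //; apply/idP/allpairsP => [dab | [[x y] /=]].
  exists (gcdn d a, gcdn d b); rewrite -!dvdn_divisors ?dvdn_gcdr //.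
  by split=> //; apply: gcdn_coprimeM.
by rewrite -!dvdn_divisors // => -[xa yb ->]; apply: dvdn_mul.
Qed.

Definition unitary_divisor n d := coprime d (n %/ d).

Definition nunitary_divisors n := count (unitary_divisor n) (divisors n).

Lemma unitary_divisorM a b x y : coprime a b -> x %| a -> y %| b ->
  unitary_divisor (a * b) (x * y) = unitary_divisor a x && unitary_divisor b y.
Proof.
move=> cab xa yb; rewrite /unitary_divisor.
have [-> | x_gt0] := posnP x; first by rewrite !mul0n !divn0.
have [-> | y_gt0] := posnP y; first by rewrite !muln0 !divn0 andbF.
have -> : a * b %/ (x * y) = a %/ x * (b %/ y).
  by rewrite -{1}(divnK xa) -{1}(divnK yb) mulnACA mulnK ?muln_gt0 ?x_gt0.
rewrite coprimeMl !coprimeMr (coprime_dvdl xa (coprime_dvdr (dvdn_div yb) cab)).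
by rewrite [coprime y _]coprime_sym (coprime_dvdl (dvdn_div xa) (coprime_dvdr yb cab)) andbT.
Qed.

Lemma nunitary_divisorsM a b : 0 < a -> 0 < b -> coprime a b ->
  nunitary_divisors (a * b) = nunitary_divisors a * nunitary_divisors b.
Proof.
move=> a_gt0 b_gt0 cab; rewrite /nunitary_divisors -!sum1_count.
rewrite [LHS](perm_big _ (divisorsM a_gt0 b_gt0 cab)) [LHS]big_mkcond big_allpairs_dep.
rewrite [X in _ = X * _]big_mkcond big_distrl /=.
apply: eq_big_seq => x; rewrite -dvdn_divisors // => xa.
rewrite [X in _ = _ * X]big_mkcond big_distrr /=.
apply: eq_big_seq => y; rewrite -dvdn_divisors // => yb.
by rewrite unitary_divisorM //; case: (unitary_divisor a x); case: (unitary_divisor b y).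
Qed.

Lemma nunitary_divisors_pfactor p k : prime p -> 0 < k ->
  nunitary_divisors (p ^ k) = 2.
Proof.
move=> p_pr k_gt0; have pk_gt1 : 1 < p ^ k by rewrite -(expn0 p) ltn_exp2l ?prime_gt1.
rewrite /nunitary_divisors -size_filter (_ : 2 = size [:: 1; p ^ k]) //.
apply/perm_size/uniq_perm; first exact/filter_uniq/divisors_uniq.
  by rewrite /= inE andbT neq_ltn pk_gt1.
have pk_gt0 : 0 < p ^ k by rewrite ltnW.
move=> d; rewrite mem_filter -(dvdn_divisors _ pk_gt0) !inE /unitary_divisor.
apply/andP/orP => [[unit_d /(dvdn_pfactor _ _ p_pr)[i le_ik def_d]] | [] /eqP->].
- rewrite def_d -expnB ?prime_gt0 // in unit_d *.
  have [-> | i_gt0] := posnP i; first by left.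
  right; rewrite eqn_exp2l ?prime_gt1 // eqn_leq le_ik leqNgt -subn_gt0.
  apply: contraTN unit_d => ki_gt0.
  by rewrite coprime_pexpl // coprime_pexpr // prime_coprime // dvdnn.
- by split; rewrite ?dvd1n ?coprime1n.
- by rewrite dvdnn divnn pk_gt0 coprimen1.
Qed.

Lemma nunitary_divisors_primes n : 0 < n -> nunitary_divisors n = 2 ^ size (primes n).
Proof.
elim/ltn_ind: n => n IHn n_gt0; have [n_le1 | n_gt1] := leqP n 1.
  by rewrite (_ : n = 1) //; apply/eqP; rewrite eqn_leq n_le1.
pose p := pdiv n; have p_pr : prime p := pdiv_prime n_gt1.
have p_n : p \in primes n by rewrite mem_primes p_pr n_gt0 pdiv_dvd.
have def_n : n`_p * n`_p^' = n := partnC p n_gt0.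
have lt_n : n`_p^' < n.
  rewrite -{2}def_n ltn_Pmull // p_part -(expn0 p) ltn_exp2l ?prime_gt1 //.
  by rewrite logn_gt0.
rewrite -{1}def_n nunitary_divisorsM ?part_gt0 ?coprime_partC // (IHn _ lt_n) ?part_gt0 //.
rewrite p_part nunitary_divisors_pfactor ?logn_gt0 // -expnS primes_part size_filter.
congr (2 ^ _); rewrite -(count_predC (pred1 p)) (count_uniq_mem _ (primes_uniq n)) p_n.
by congr _.+1; apply: eq_count => q; rewrite !inE.
Qed.

Lemma prod_divisors_sqr N : 0 < N -> prod_divisors N ^ 2 = N ^ size (divisors N).
Proof. by move=> N_gt0; rewrite -count_predT -prod_divisors_compl_sqr. Qed.

Lemma prod_unitary_divisors_sqr n : 0 < n ->
  prod_unitary_divisors n ^ 2 = n ^ 2 ^ size (primes n).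
Proof.
move=> n_gt0; rewrite -nunitary_divisors_primes // prod_divisors_compl_sqr // => d.
by rewrite -dvdn_divisors // => dn; rewrite divn_divn_dvd // coprime_sym.
Qed.

Lemma prod_unitary_divisors_expn n : 1 < n ->
  prod_unitary_divisors n = n ^ 2 ^ (size (primes n)).-1.
Proof.
move=> n_gt1; have n_gt0 := ltnW n_gt1.
have omega_gt0 : 0 < size (primes n) by rewrite lt0n size_eq0 primes_eq0 -ltnNge.
apply: (@expIn 2) => //; rewrite prod_unitary_divisors_sqr // -expnM -expnSr.
by rewrite prednK.
Qed.

Lemma size_divisors_expn n k : 0 < k ->
  size (divisors (n ^ k)) = \prod_(p <- primes n) (k * logn p n).+1.
Proof. by move=> k_gt0; rewrite size_divisors primesX //; under eq_bigr do rewrite lognX. Qed.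

Lemma T0Tstar_perfect_exponent K n : K_T0Tstar_perfect K n ->
  K * 2 = 2 ^ (size (primes n)).-1 *
          \prod_(p <- primes n) (2 ^ (size (primes n)).-1 * logn p n).+1.
Proof.
move=> [n_gt1 perfect]; have n_gt0 := ltnW n_gt1; apply: (expnI n_gt1).
rewrite -size_divisors_expn ?expn_gt0 // [RHS]expnM -(prod_unitary_divisors_expn n_gt1).
by rewrite -prod_divisors_sqr ?perfect ?expnM // prod_unitary_divisors_expn // expn_gt0 n_gt0.
Qed.

Lemma logn2_expn_odd a x : odd x -> logn 2 (2 ^ a * x) = a.
Proof.
move=> x_odd; rewrite lognM ?expn_gt0 ?(odd_gt0 x_odd) // pfactorK //.
by rewrite logn_coprime ?addn0 // coprime2n.
Qed.

Lemma prodn_eq_expn_lb (I : eqType) (r : seq I) (F : I -> nat) c : 0 < c ->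
  {in r, forall i, c <= F i} -> \prod_(i <- r) F i = c ^ size r -> {in r, forall i, F i = c}.
Proof.
move=> c_gt0; elim: r => [|x r IHr] // F_ge; rewrite big_cons expnS => eq_prod.
have F_ge_r : {in r, forall i, c <= F i} by move=> i ri; rewrite F_ge // inE ri orbT.
have ge_prod : c ^ size r <= \prod_(i <- r) F i.
  rewrite -(count_predT r) -iter_muln_1 -big_const_seq big_seq_cond [X in _ <= X]big_seq_cond.
  by apply: leq_prod => i /andP[/F_ge_r].
have Fx_ge : c <= F x by rewrite F_ge ?mem_head.
have cr_gt0 : 0 < c ^ size r by rewrite expn_gt0 c_gt0.
have eq_r : \prod_(i <- r) F i = c ^ size r.
  apply/eqP; rewrite eqn_leq ge_prod andbT -(leq_pmul2l c_gt0) -eq_prod.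
  by rewrite leq_mul2r Fx_ge orbT.
have eq_x : F x = c by apply/eqP; move: eq_prod; rewrite eq_r => /eqP; rewrite eqn_pmul2r.
by move=> i; rewrite inE => /predU1P[-> // | /(IHr F_ge_r eq_r)].
Qed.

Lemma prod_primes_logn n : 0 < n -> n = \prod_(p <- primes n) p ^ logn p n.
Proof. by move=> n_gt0; rewrite {1}(prod_prime_decomp n_gt0) prime_decompE big_map. Qed.

Lemma logn_eq1_of_prod_primes n t : 0 < t ->
  \prod_(p <- primes n) (t * logn p n).+1 = t.+1 ^ size (primes n) ->
  {in primes n, forall p, logn p n = 1}.
Proof.
move=> t_gt0 eq_prod p p_n.
have /eqP : (t * logn p n).+1 = t.+1.
  apply: (prodn_eq_expn_lb _ _ eq_prod) => // q q_n.
  by rewrite ltnS leq_pmulr // logn_gt0.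
by rewrite eqSS -{2}(muln1 t) eqn_pmul2l // => /eqP.
Qed.

Lemma T0Tstar_perfect_prime_power K n : K_T0Tstar_perfect K n ->
  size (primes n) <= 1 -> exists2 p, prime p & n = p ^ (K * 2).-1.
Proof.
move=> perfect omega_le1; have [n_gt1 _] := perfect.
have := T0Tstar_perfect_exponent perfect; have := prod_primes_logn (ltnW n_gt1).
have := all_prime_primes n; case: (primes n) omega_le1 => [| p []] //= _.
  by rewrite big_nil => _ n_eq1; rewrite n_eq1 in n_gt1.
by rewrite andbT !big_seq1 expn0 !mul1n => p_pr def_n ->; exists p.
Qed.

Lemma T0Tstar_perfect_squarefree m n :
  K_T0Tstar_perfect (2 ^ m * (2 ^ m.+1 + 1) ^ (m + 2)) n -> 1 < size (primes n) ->
  size (primes n) = m + 2 /\ n = \prod_(p <- primes n) p.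
Proof.
move=> perfect omega_gt1; have [/ltnW n_gt0 _] := perfect.
have := T0Tstar_perfect_exponent perfect; rewrite mulnAC -expnSr.
set t := 2 ^ (size (primes n)).-1 => exponent.
have t_even : ~~ odd t by rewrite oddX orbF -lt0n -subn1 subn_gt0.
have prod_odd : odd (\prod_(p <- primes n) (t * logn p n).+1).
  by elim/big_rec: _ => // p x _; rewrite oddM /= oddM (negbTE t_even).
have omega_eq : m.+1 = (size (primes n)).-1.
  (* compare 2-adic valuations: t is a power of 2 and the product is odd *)
  have /(congr1 (logn 2)) := exponent.
  by rewrite logn2_expn_odd ?oddX ?oddD ?oddX ?orbT // logn2_expn_odd.
have t_def : t = 2 ^ m.+1 by rewrite /t omega_eq.
have size_primes : size (primes n) = m + 2 by rewrite addn2 omega_eq prednK // ltnW.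
have t_gt0 : 0 < t by rewrite expn_gt0.
move: exponent; rewrite {1}t_def => /eqP; rewrite eqn_pmul2l ?expn_gt0 // addn1 -t_def.
rewrite -size_primes => /eqP /esym /(logn_eq1_of_prod_primes t_gt0) logn_eq1.
split=> //; rewrite {1}(prod_primes_logn n_gt0).
by apply: eq_big_seq => p /logn_eq1 ->.
Qed.

Theorem mainTheorem13 (m n : nat) :
  0 < m ->
  K_T0Tstar_perfect (2 ^ m * (2 ^ m.+1 + 1) ^ (m + 2)) n ->
  (exists p1 : nat, prime p1 /\ n = p1 ^ (2 ^ m.+1 * (2 ^ m.+1 + 1) ^ (m + 2) - 1))
  \/
  (exists ps : seq nat, size ps = m + 2 /\ uniq ps /\ all prime ps /\
     n = \prod_(p <- ps) p).
Proof.
move=> _ perfect; have [omega_le1 | omega_gt1] := leqP (size (primes n)) 1.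
  have [p p_pr def_n] := T0Tstar_perfect_prime_power perfect omega_le1.
  by left; exists p; rewrite def_n mulnAC -expnSr subn1.
have [size_primes def_n] := T0Tstar_perfect_squarefree perfect omega_gt1.
by right; exists (primes n); rewrite size_primes primes_uniq all_prime_primes.
Qed.
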